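(* For every $n\in\mathbb{N}$ there exists a directed acyclic graph $D_n$ with $\operatorname{dbw}(D_n)\ge n$.
   Context: For a digraph $D$ and $X\subseteq E(D)$, $S^V_X=\{y: \exists x,z,\ \vec{xy}\in E(D)\setminus X,\ \vec{yz}\in X\}$. The directed branch-width $\operatorname{dbw}(D)$ is the minimum over pairs $(T,\beta)$ ($T$ a tree of maximum degree at most three, $\beta$ a bijection from the leaves of $T$ onto $E(D)$) of the maximum over edges $t$ of $T$ of $|S^V_{\beta(Y)}\cup S^V_{E(D)\setminus\beta(Y)}|$, where $Y$ is the set of leaves on one side of $T-t$ (width 0 if $T$ has no edges). *)

From mathcomp Require Import all_boot.
Set Implicit Arguments. Unset Strict Implicit. Unset Printing Implicit Defensive.

(* A (simple, finite) digraph is a finite vertex type V with an arc relation e;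
   its arc set E(D) is the set of pairs (x,y) with e x y. *)
Definition arcs (V : finType) (e : rel V) : {set V * V} := [set p | e p.1 p.2].

(* Directed acyclic: no directed cycle (in particular no loops). *)
Definition dag (V : finType) (e : rel V) : Prop :=
  forall x y, e x y -> ~~ connect e y x.

Definition SV (V : finType) (e : rel V) (X : {set V * V}) : {set V} :=
  [set y | [exists x, [exists z, ((x, y) \in arcs e :\: X) && ((y, z) \in X)]]].

Definition is_tree (T : finType) (t : rel T) : Prop :=
  [/\ 0 < #|T|, symmetric t, irreflexive t,
      (forall x y : T, connect t x y) &
      #|[set p : T * T | t p.1 p.2]| = 2 * (#|T| - 1)].

Definition deg (T : finType) (t : rel T) (x : T) : nat := #|[set y | t x y]|.

(* leaves: vertices of degree at most one (a one-vertex tree is its own leaf) *)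
Definition leaves (T : finType) (t : rel T) : {set T} := [set x | deg t x <= 1].

Definition del_edge (T : finType) (t : rel T) (u v : T) : rel T :=
  fun x y => t x y && ~~ (((x == u) && (y == v)) || ((x == v) && (y == u))).

Definition side (T : finType) (t : rel T) (u v : T) : {set T} :=
  [set l in leaves t | connect (del_edge t u v) u l].

Definition edge_width (V : finType) (e : rel V) (T : finType) (t : rel T)
    (beta : T -> V * V) (u v : T) : nat :=
  let X := beta @: side t u v in
  #|SV e X :|: SV e (arcs e :\: X)|.

(* width of (T, beta): max over tree edges (0 if T has no edges) *)
Definition decomp_width (V : finType) (e : rel V) (T : finType) (t : rel T)
    (beta : T -> V * V) : nat :=
  \max_(p : T * T | t p.1 p.2) edge_width e t beta p.1 p.2.

Definition branch_decomp (V : finType) (e : rel V) (T : finType) (t : rel T)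
    (beta : T -> V * V) : Prop :=
  [/\ is_tree t, (forall x, deg t x <= 3),
      {in leaves t &, injective beta} &
      beta @: leaves t = arcs e].

(* dbw(D) >= n : dbw is the minimum width over all directed branch
   decompositions; by convention dbw(D) = 0 when E(D) is empty (no
   decomposition exists then). *)
Definition dbw_ge (V : finType) (e : rel V) (n : nat) : Prop :=
  (arcs e = set0 -> n = 0) /\
  (forall (T : finType) (t : rel T) (beta : T -> V * V),
      branch_decomp e t beta -> n <= decomp_width e t beta).

From mathcomp Require Import all_boot zify.
Set Implicit Arguments. Unset Strict Implicit. Unset Printing Implicit Defensive.

(* The digraphs D_n are transitive tournaments: vertices 0 < 1 < ... < N+1
   with an arc x -> y whenever x < y, for N = 3k and k = (n+1)^2 + 1.  They
   are acyclic, and they have at least N + 1 arcs.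

   In a tree of maximum degree three with at least 3k leaves some
   edge uv is balanced: both sides of T - uv contain at least k leaves.  Such
   an edge is found by walking from an edge with a heavy side towards that
   side while it stays heavy; the walk stops because the component shrinks.
   That T - uv is disconnected follows from the edge count of trees together
   with the lower bound 2(|T|-1) on the (ordered) edge count of any connected
   graph, obtained from a BFS parent function.

   If an arc set X of the tournament has a boundary M (the
   vertices where X and its complement meet on a directed 2-path) of size
   less than N, then some inner vertex c lies outside M.  Every vertex off
   M and distinct from 0, N+1 carries only arcs of one colour (in X or not),
   the same colour as c, so the arcs of the other colour have both ends in
   M + {0, N+1}: one of X, E(D) \ X has at most (|M| + 2)^2 arcs.

   The main theorem applies the second fact to the arc set of one side of a
   balanced edge: both sides have more than (n+1)^2 arcs, so the edge has
   width at least n. *)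

Lemma connect_invariant (T : finType) (r : rel T) (P : pred T) x y :
  P x -> (forall a b, connect r x a -> P a -> r a b -> P b) ->
  connect r x y -> P y.
Proof.
move=> Px step /connectP [p rp ->].
suff: forall z, connect r x z -> P z -> path r z p -> P (last z p).
  by apply; rewrite ?connect0.
elim: p {rp} => [|a p IH] z xz Pz //= /andP[rza rp].
exact: IH (connect_trans xz (connect1 rza)) (step _ _ xz Pz rza) rp.
Qed.

Lemma card_bigcup_leq (I T : finType) (P : pred I) (F : I -> {set T}) :
  #|\bigcup_(i | P i) F i| <= \sum_(i | P i) #|F i|.
Proof.
elim/big_rec2: _ => [|i B n _ IH]; first by rewrite cards0.
exact: leq_trans (leq_card_setU _ _) (leq_add _ IH).
Qed.

(* If every vertex is reachable from r0, each other vertex x has an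
   r-predecessor pa x of strictly smaller rank d (its distance from r0). *)
Lemma rooted_descent (T : finType) (r : rel T) (r0 : T) :
  (forall x, connect r r0 x) ->
  exists (pa : T -> T) (d : T -> nat),
    forall x, x != r0 -> r (pa x) x /\ d (pa x) < d x.
Proof.
move=> reach.
have path_len x :
    exists m, [exists p : m.-tuple T, path r r0 p && (last r0 p == x)].
  case/connectP: (reach x) => p rp ->; exists (size p).
  by apply/existsP; exists (in_tuple p); rewrite /= rp eqxx.
pose d x := ex_minn (path_len x).
have d_min x p : path r r0 p -> last r0 p = x -> d x <= size p.
  move=> rp px; rewrite /d; case: ex_minnP => m _; apply.
  by apply/existsP; exists (in_tuple p); rewrite /= rp px eqxx.
have d_step x : x != r0 -> exists y, r y x && (d y < d x).
  rewrite /d; case: ex_minnP => m /existsP[p /andP[rp /eqP px]] _.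
  move: (size_tuple p) rp px; case/lastP: (val p) => [|q z].
    by move=> _ _ /= <-; rewrite eqxx.
  rewrite size_rcons rcons_path last_rcons => <- /andP[rq rz] <- _.
  by exists (last r0 q); rewrite rz ltnS d_min.
have /fin_all_exists[pa paP] x :
    exists y, (x != r0) ==> (r y x && (d y < d x)).
  by case: (boolP (x == r0)) => [_|/d_step[y]]; [exists x | exists y].
by exists pa, d => x /(implyP (paP x))/andP.
Qed.

(* A connected symmetric relation on T has at least 2(|T| - 1) ordered
   pairs: the pairs (pa x, x) and (x, pa x) for x <> r0 are all distinct. *)
Lemma connected_arcs_lb (T : finType) (r : rel T) (r0 : T) :
  symmetric r -> (forall x y, connect r x y) ->
  2 * (#|T| - 1) <= #|[set p : T * T | r p.1 p.2]|.
Proof.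
move=> sym_r conn.
have [pa [d paP]] := rooted_descent (conn r0).
pose down := [set (pa x, x) | x in [set~ r0]].
pose up := [set (x, pa x) | x in [set~ r0]].
have card_half (f : T -> T * T) :
  injective f -> #|f @: [set~ r0]| = #|T| - 1.
  by move=> f_inj; rewrite card_imset // cardsC1 subn1.
have disj : down :&: up = set0.
  apply/setP => p; rewrite !inE; apply/negP.
  case/andP=> /imsetP[x x_r0 ->] /imsetP[y y_r0 [xy yx]].
  move: x_r0 y_r0; rewrite !inE => /paP[_ lt_x] /paP[_].
  by rewrite -yx -xy => /(ltn_trans lt_x); rewrite ltnn.
have sub : down :|: up \subset [set p : T * T | r p.1 p.2].
  apply/subsetP => p /setUP[] /imsetP[x x_r0 ->];
  by move: x_r0; rewrite !inE => /paP[rx _]; rewrite // sym_r.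
have := subset_leq_card sub.
rewrite cardsU disj cards0 subn0 !card_half ?mul2n ?addnn //.
- by move=> x y [].
- by move=> x y [].
Qed.

Section Tree.
Variables (T : finType) (t : rel T).
Hypothesis t_tree : is_tree t.

Let t_sym : symmetric t. Proof. by case: t_tree. Qed.
Let t_irr : irreflexive t. Proof. by case: t_tree. Qed.
Let t_conn : forall x y, connect t x y. Proof. by case: t_tree. Qed.

Lemma tree_edge_neq u v : t u v -> u != v.
Proof. by apply: contraTneq => ->; rewrite t_irr. Qed.

Lemma del_edge_sym u v : symmetric (del_edge t u v).
Proof.
move=> x y; rewrite /del_edge t_sym; congr (_ && ~~ _).
by rewrite orbC; congr (_ || _); apply: andbC.
Qed.

Lemma del_edge_swap u v : del_edge t v u =2 del_edge t u v.
Proof. by move=> x y; rewrite /del_edge orbC. Qed.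

(* Every tree edge is a bridge: otherwise T - uv would be a connected graph
   with fewer than 2(|T| - 1) ordered edges. *)
Lemma tree_edge_cut u v : t u v -> ~~ connect (del_edge t u v) u v.
Proof.
case: t_tree => _ _ _ _ n_arcs tuv; apply/negP => cuv.
have conn x y : connect (del_edge t u v) x y.
  apply: connect_sub (t_conn x y) => a b tab.
  case dab: (del_edge t u v a b); first exact: connect1.
  move: dab; rewrite /del_edge tab => /negbFE/orP[]/andP[/eqP-> /eqP->] //.
  by rewrite (sym_connect_sym (@del_edge_sym u v)).
have uv_arcs : [set (u, v); (v, u)] \subset [set p : T * T | t p.1 p.2].
  by apply/subsetP => p; rewrite !inE => /orP[]/eqP-> /=; rewrite ?tuv // t_sym.
have sub : [set p : T * T | del_edge t u v p.1 p.2]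
    \subset [set p : T * T | t p.1 p.2] :\: [set (u, v); (v, u)].
  apply/subsetP => -[a b]; rewrite !inE /del_edge /= !xpair_eqE.
  by case/andP=> -> ->.
have uv := tree_edge_neq tuv.
have two_le : 2 <= #|T| by have := max_card [set u; v]; rewrite cards2 uv.
have := leq_trans (connected_arcs_lb u (@del_edge_sym u v) conn)
                  (subset_leq_card sub).
rewrite cardsD (setIidPr uv_arcs) n_arcs cards2 xpair_eqE negb_and uv.
by move: two_le; clear; lia.
Qed.

Lemma sides_cover u v :
  t u v -> leaves t \subset side t u v :|: side t v u.
Proof.
move=> tuv; apply/subsetP => l l_leaf.
rewrite inE in l_leaf; rewrite !inE l_leaf /= (eq_connect (del_edge_swap u v)).
pose P y := connect (del_edge t u v) u y || connect (del_edge t u v) v y.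
apply: (connect_invariant (P := P) _ _ (t_conn u l)); first by rewrite /P connect0.
move=> a b _ Pa tab; case dab: (del_edge t u v a b).
  by case/orP: Pa => ca; rewrite /P (connect_trans ca (connect1 dab)) ?orbT.
move: dab; rewrite /del_edge tab => /negbFE/orP[]/andP[_ /eqP->];
by rewrite /P connect0 ?orbT.
Qed.

Lemma leaf_neighbour u v w : t u v -> u \in leaves t -> t u w -> w = v.
Proof.
move=> tuv u_leaf tuw; apply/eqP; apply: contraTT u_leaf => wv.
have : [set v; w] \subset [set y | t u y].
  by apply/subsetP => y; rewrite !inE => /orP[]/eqP->.
by move/subset_leq_card; rewrite cards2 eq_sym wv inE /deg -ltnNge.
Qed.

Lemma leaf_side u v : t u v -> u \in leaves t -> side t u v \subset [set u].
Proof.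
move=> tuv u_leaf; apply/subsetP => l; rewrite !inE => /andP[_].
apply: (connect_invariant (P := pred1 u)) => //= a b _ /eqP-> /andP[tub].
by rewrite (leaf_neighbour tuv u_leaf tub) !eqxx.
Qed.

Lemma side_split u v : t u v ->
  side t u v \subset u |: \bigcup_(w in [set y | t u y] :\ v) side t w u.
Proof.
move=> tuv; apply/subsetP => l; rewrite inE => /andP[l_leaf ul].
pose P y := (y == u) ||
  [exists w, [&& t u w, w != v & connect (del_edge t w u) w y]].
have : P l.
  apply: (connect_invariant (P := P)) ul; first by rewrite /P eqxx.
  move=> a b _ Pa dab; rewrite /P; case bu: (b == u) => //=.
  case/orP: Pa => [/eqP au|/existsP[w /and3P[tuw wv wa]]].
    move: dab; rewrite au /del_edge eqxx /= => /andP[tub].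
    by rewrite negb_or => /andP[bv _]; apply/existsP; exists b; rewrite tub bv connect0.
  apply/existsP; exists w; rewrite tuw wv /=.
  case: (boolP (del_edge t w u a b)) => [dw|]; first exact: connect_trans wa (connect1 dw).
  rewrite /del_edge (andP dab).1 /= negbK bu andbF /= => /andP[_ /eqP->].
  exact: connect0.
case/orP => [/eqP->|/existsP[w /and3P[tuw wv wl]]]; first by rewrite !inE eqxx.
rewrite !inE; apply/orP; right; apply/bigcupP; exists w.
  by rewrite !inE wv tuw.
by rewrite inE l_leaf.
Qed.

Definition component u v : {set T} := [set x | connect (del_edge t u v) u x].

Lemma component_proper u v w :
  t u v -> t u w -> w != v -> component w u \proper component u v.
Proof.
move=> tuv tuw wv.
have cut : ~~ connect (del_edge t w u) w u by apply: tree_edge_cut; rewrite t_sym.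
apply/properP; split; last by exists u; rewrite !inE ?connect0.
apply/subsetP => x; rewrite !in_set.
apply: (connect_invariant (P := connect (del_edge t u v) u)).
  apply: connect1; rewrite /del_edge tuw eqxx (negbTE wv) /=.
  by rewrite (negbTE (tree_edge_neq tuv)).
move=> a b wa ua dab.
have au : a != u by apply: contraNneq cut => au; rewrite au in wa.
have bu : b != u.
  apply: contraNneq cut => bu; rewrite bu in dab.
  exact: connect_trans wa (connect1 dab).
apply: connect_trans ua (connect1 _).
by rewrite /del_edge (andP dab).1 (negbTE au) (negbTE bu) /= andbF.
Qed.

Hypothesis t_subcubic : forall x, deg t x <= 3.

Lemma side_bound u v b : t u v -> u \notin leaves t ->
  (forall w, t u w -> w != v -> #|side t w u| <= b) ->
  #|side t u v| <= 2 * b.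
Proof.
move=> tuv u_inner small; set W := [set y | t u y] :\ v.
have card_W : #|W| <= 2.
  by have := t_subcubic u; rewrite /deg (cardsD1 v) inE tuv.
have cover_W : side t u v \subset \bigcup_(w in W) side t w u.
  apply/subsetP => l l_side; move/subsetP/(_ l l_side): (side_split tuv).
  case/setU1P => [l_u|//]; move: l_side; rewrite l_u inE.
  by rewrite (negbTE u_inner).
apply: leq_trans (subset_leq_card cover_W) _.
apply: leq_trans (card_bigcup_leq _ _) _.
apply: leq_trans (_ : \sum_(w in W) b <= _); last first.
  by rewrite sum_nat_const leq_mul2r card_W orbT.
by apply: leq_sum => w; rewrite !inE => /andP[wv tuw]; exact: small.
Qed.

Section Balanced.
Variable k : nat.
Hypotheses (k_gt0 : 0 < k) (k_small : 3 * k <= #|leaves t|).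

(* From an edge uv with at least k leaves on u's side, step to an edge wu
   at u with at least k leaves on w's side as long as fewer than k leaves
   remain on the other side; the component shrinks at each step. *)
Lemma balanced_edge_from u v : t u v -> k <= #|side t u v| ->
  exists u' v', [/\ t u' v', k <= #|side t u' v'|
                  & #|side t u' v'| <= #|leaves t| - k].
Proof.
have [c] := ubnP #|component u v|; elim: c u v => // c IH u v lt_c tuv k_le.
have [le|gt] := leqP #|side t u v| (#|leaves t| - k); first by exists u, v.
have u_inner : u \notin leaves t.
  apply: contraTN gt => u_leaf; rewrite -leqNgt.
  apply: leq_trans (subset_leq_card (leaf_side tuv u_leaf)) _.
  by rewrite cards1; move: k_gt0 k_small; clear; lia.
have : [exists w, [&& t u w, w != v & k <= #|side t w u|]].
  apply: contraTT gt => /existsPn small; rewrite -leqNgt.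
  apply: leq_trans (side_bound (b := k.-1) tuv u_inner _) _.
    move=> w tuw wv; have := small w; rewrite tuw wv -ltnNge.
    by move: k_gt0; clear; lia.
  by move: k_gt0 k_small; clear; lia.
case/existsP => w /and3P[tuw wv k_le_w].
apply: (IH w u) => //; last by rewrite t_sym.
exact: leq_trans (proper_card (component_proper tuv tuw wv)) _.
Qed.

Lemma balanced_edge : exists u v, [/\ t u v, k <= #|side t u v|
                                   & #|side t u v| <= #|leaves t| - k].
Proof.
have [l1 [l2 [_ _ l12]]] :
    exists l1 l2, [/\ l1 \in leaves t, l2 \in leaves t & l1 != l2].
  by apply/card_gt1P; move: k_gt0 k_small; clear; lia.
case/connectP: (t_conn l1 l2) => -[|a p] /=.
  by move=> _ l21; rewrite l21 eqxx in l12.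
case/andP => tla _ _.
have := leq_trans (subset_leq_card (sides_cover tla)) (leq_card_setU _ _).
have [k_le _|lt_k cover] := leqP k #|side t l1 a|.
  exact: balanced_edge_from tla k_le.
apply: (@balanced_edge_from a l1); [by rewrite t_sym|].
by move: cover lt_k k_small; clear; lia.
Qed.

End Balanced.
End Tree.

Definition boundary (V : finType) (e : rel V) (X : {set V * V}) : {set V} :=
  SV e X :|: SV e (arcs e :\: X).

Lemma off_boundary_homogeneous (V : finType) (e : rel V) (X : {set V * V}) x y z :
  y \notin boundary e X -> e x y -> e y z -> ((x, y) \in X) = ((y, z) \in X).
Proof.
rewrite !inE negb_or => /andP[not_in not_out] xy yz.
case ex: ((x, y) \in X); case ez: ((y, z) \in X) => //.
  case/negP: not_out; apply/existsP; exists x; apply/existsP; exists z.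
  by rewrite !inE /= ex ez xy yz.
case/negP: not_in; apply/existsP; exists x; apply/existsP; exists z.
by rewrite !inE /= ex ez xy.
Qed.

Definition tournament (N : nat) : rel 'I_N.+2 := fun x y => x < y.
Arguments tournament : clear implicits.

(* Arcs increase the vertex index, so there is no directed cycle. *)
Lemma tournament_dag (N : nat) : dag (tournament N).
Proof.
move=> x y xy; apply/negP => yx.
have : y <= x.
  apply: (connect_invariant (P := fun a : 'I_N.+2 => y <= a)) yx => // a b _ ya ab.
  exact: leq_trans ya (ltnW ab).
by rewrite leqNgt => /negP[].
Qed.

(* The arcs leaving 0 already give N + 1 arcs. *)
Lemma tournament_arcs (N : nat) : N.+1 <= #|arcs (tournament N)|.
Proof.
pose out0 (j : 'I_N.+1) : 'I_N.+2 * 'I_N.+2 := (ord0, lift ord0 j).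
have out0_inj : injective out0.
  by move=> i j /(congr1 snd) /= e; exact: lift_inj e.
have card_out0 : #|out0 @: [set: 'I_N.+1]| = N.+1.
  by rewrite card_imset // cardsT card_ord.
rewrite -[X in X <= _]card_out0; apply: subset_leq_card.
apply/subsetP => p /imsetP[j _ ->].
by rewrite inE /= /tournament lift0.
Qed.

Lemma inner_vertex_outside (N : nat) (S : {set 'I_N.+2}) :
  #|S| < N -> exists c : 'I_N.+2, [/\ 0 < c, c < N.+1 & c \notin S].
Proof.
move=> small_S; pose inner (i : 'I_N) : 'I_N.+2 := inord i.+1.
have inner_val i : inner i = i.+1 :> nat.
  by rewrite inordK //; have := ltn_ord i; lia.
have : ~~ (inner @: [set: 'I_N] \subset S).
  apply: contraTN small_S => /subset_leq_card; rewrite -leqNgt card_imset.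
    by rewrite cardsT card_ord.
  by move=> i j /(congr1 (@nat_of_ord _)); rewrite !inner_val => -[/val_inj].
case/subsetPn => _ /imsetP[i _ ->] notS; exists (inner i).
by rewrite inner_val !ltnS ltn_ord.
Qed.

Section Minority.
Variables (N : nat) (X : {set 'I_N.+2 * 'I_N.+2}).
Let e := tournament N.

(* B adds the two ends 0 and N+1 to the boundary; the colour of a vertex y
   records whether the arc 0 -> y lies in X. *)
Let B : {set 'I_N.+2} := boundary e X :|: [set ord0; ord_max].
Let colour (y : 'I_N.+2) : bool := (ord0, y) \in X.

Lemma off_B y : y \notin B -> [/\ 0 < y, y < N.+1 & y \notin boundary e X].
Proof.
rewrite !inE !negb_or => /and3P[y_M y_0 y_max]; split => //.
  by rewrite lt0n; apply: contra y_0 => /eqP y0; apply/eqP/val_inj.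
move: (ltn_ord y); rewrite ltnS leq_eqVlt => /predU1P[y_N|//].
by case/negP: y_max; apply/eqP/val_inj.
Qed.

Lemma inner_off_B (y : 'I_N.+2) :
  0 < y -> y < N.+1 -> y \notin boundary e X -> y \notin B.
Proof.
move=> y_gt0 y_lt y_M.
have y_0 : y != ord0 by apply: contraTneq y_gt0 => ->.
have y_max : y != ord_max by apply: contraTneq y_lt => ->; rewrite ltnn.
by rewrite in_setU negb_or y_M !inE negb_or y_0 y_max.
Qed.

Lemma arc_colour y : y \notin B ->
  (forall x, e x y -> ((x, y) \in X) = colour y) /\
  (forall z, e y z -> ((y, z) \in X) = colour y).
Proof.
case/off_B => y_gt0 y_lt y_M; split => [x xy|z yz]; rewrite /colour.
  have y_max : e y ord_max by [].
  rewrite (off_boundary_homogeneous y_M xy y_max).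
  by rewrite (off_boundary_homogeneous (x := ord0) y_M _ y_max).
by rewrite (off_boundary_homogeneous y_M _ yz).
Qed.

Lemma colour_const y1 y2 : y1 \notin B -> y2 \notin B -> colour y1 = colour y2.
Proof.
move=> y1_B y2_B.
have [in1 out1] := arc_colour y1_B; have [in2 out2] := arc_colour y2_B.
case: (ltngtP y1 y2) => [lt|lt|y12]; last by congr colour; apply: val_inj.
  by rewrite -(out1 _ lt) (in2 _ lt).
by rewrite -(in1 _ lt) (out2 _ lt).
Qed.

(* If the boundary of X has fewer than N vertices, then X or its complement
   consists of arcs with both ends in B, hence has at most (|M| + 2)^2 arcs
   where M is the boundary. *)
Lemma minority_bound : #|boundary e X| < N ->
  #|arcs e :&: X| <= (#|boundary e X| + 2) ^ 2 \/
  #|arcs e :\: X| <= (#|boundary e X| + 2) ^ 2.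
Proof.
move=> small_M.
have [c [c_gt0 c_lt c_M]] := inner_vertex_outside small_M.
have c_B := inner_off_B c_gt0 c_lt c_M.
have minority_in_B p : p \in arcs e -> (p \in X) != colour c -> p \in setX B B.
  case: p => x y; rewrite inE /= => xy; apply: contraR.
  rewrite in_setX negb_and => /orP[] notB; have [in_y out_x] := arc_colour notB.
    by rewrite (out_x _ xy) (colour_const notB c_B).
  by rewrite (in_y _ xy) (colour_const notB c_B).
have card_B : #|setX B B| <= (#|boundary e X| + 2) ^ 2.
  have le_B : #|B| <= #|boundary e X| + 2.
    apply: leq_trans (leq_card_setU _ _) _.
    by rewrite leq_add2l cards2; case: (_ != _).
  by rewrite cardsX -mulnn leq_mul.
case col_c: (colour c); [right|left]; apply: leq_trans card_B;
  apply: subset_leq_card; apply/subsetP => p; rewrite (in_setD, in_setI) => /andP[].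
  by move=> pX pa; apply: minority_in_B => //; rewrite (negbTE pX) col_c.
by move=> pa pX; apply: minority_in_B => //; rewrite pX col_c.
Qed.
End Minority.

Lemma large_boundary (N b : nat) (X : {set 'I_N.+2 * 'I_N.+2}) : b <= N ->
  b.+1 ^ 2 < #|arcs (tournament N) :&: X| ->
  b.+1 ^ 2 < #|arcs (tournament N) :\: X| ->
  b <= #|boundary (tournament N) X|.
Proof.
move=> b_N big_in big_out; rewrite leqNgt; apply/negP => small.
have bound : (#|boundary (tournament N) X| + 2) ^ 2 <= b.+1 ^ 2.
  by rewrite leq_exp2r // addn2.
have [le|le] := minority_bound (leq_trans small b_N).
- by move: (leq_trans le bound); rewrite leqNgt big_in.
- by move: (leq_trans le bound); rewrite leqNgt big_out.
Qed.

Theorem mainTheorem14 : forall n : nat,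
  exists (V : finType) (e : rel V), dag e /\ dbw_ge e n.
Proof.
move=> n; set k := n.+1 ^ 2 + 1; set N := 3 * k.
exists _, (tournament N); split; first exact: tournament_dag.
have arcs_N := tournament_arcs N.
split.
  by move=> arcs0; move: arcs_N; rewrite arcs0 cards0.
move=> T t beta [t_tree t_sub beta_inj beta_onto].
have card_leaves : #|leaves t| = #|arcs (tournament N)|.
  by rewrite -beta_onto card_in_imset.
have k_gt0 : 0 < k by rewrite /k addn1.
have k_small : 3 * k <= #|leaves t| by rewrite card_leaves ltnW.
have [u [v [tuv k_le le_k]]] := balanced_edge t_tree t_sub k_gt0 k_small.
(* The width of (T, beta) is at least the width of the edge uv, which is the
   size of the boundary of the arc set X of u's side. *)
apply: leq_trans (leq_bigmax_cond (u, v) tuv) => /=.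
set X := beta @: side t u v.
have side_leaves : side t u v \subset leaves t.
  by apply/subsetP => l; rewrite inE => /andP[].
have X_arcs : X \subset arcs (tournament N) by rewrite -beta_onto imsetS.
have card_X : #|X| = #|side t u v|.
  by rewrite card_in_imset //; apply: sub_in2 beta_inj; apply/subsetP.
apply: large_boundary.
- by rewrite /N /k; lia.
- by rewrite -/X (setIidPr X_arcs) card_X; apply: leq_trans k_le; rewrite /k addn1.
- rewrite -/X cardsD (setIidPr X_arcs) card_X -card_leaves.
  by move: le_k k_small; rewrite /k; lia.
Qed.
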